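(* Consider the system of $N$ symplectic point vortices in $\mathbb R^{2m}=\mathbb C^m$: the Hamiltonian system on $(\mathbb R^{2m})^N$ with coordinates $x_{j,\alpha},y_{j,\alpha}$ ($1\le j\le N$, $1\le\alpha\le m$), Poisson bracket $$\{f,g\}=\sum_{j=1}^N\frac1{\Gamma_j}\sum_{\alpha=1}^m\Big(\frac{\partial f}{\partial x_{j,\alpha}}\frac{\partial g}{\partial y_{j,\alpha}}-\frac{\partial f}{\partial y_{j,\alpha}}\frac{\partial g}{\partial x_{j,\alpha}}\Big)$$ and Hamiltonian $\mathcal H=2C(2m)\sum_{j<k}\Gamma_j\Gamma_k|\tilde z_j-\tilde z_k|^{2-2m}$ for $m>1$ (resp. $\mathcal H=-\frac1{4\pi}\sum_{j<k}\Gamma_j\Gamma_k\ln|\tilde z_j-\tilde z_k|^2$ for $m=1$). This system is invariant with respect to the group $E(2m)=U(m)\ltimes\mathbb R^{2m}$ of unitary motions of $\mathbb R^{2m}=\mathbb C^m$ (acting diagonally on all vortices). The corresponding $m^2+2m$ conserved quantities, which Poisson commute with $\mathcal H$, are $$Q_\alpha=\sum_{j=1}^N\Gamma_jx_{j,\alpha},\quad P_\alpha=\sum_{j=1}^N\Gamma_jy_{j,\alpha}\quad(1\le\alpha\le m),$$ $$F^+_{\alpha\beta}=\sum_{j=1}^N\Gamma_j(x_{j,\alpha}x_{j,\beta}+y_{j,\alpha}y_{j,\beta})\quad(1\le\alpha\le\beta\le m),$$ $$F^-_{\alpha\beta}=\sum_{j=1}^N\Gamma_j(x_{j,\alpha}y_{j,\beta}-x_{j,\beta}y_{j,\alpha})\quad(1\le\alpha<\beta\le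 m).$$
   Context: $\tilde z_j=(x_{j,1},\dots,x_{j,m},y_{j,1},\dots,y_{j,m})\in\mathbb R^{2m}$ is the position of the $j$-th vortex, identified with $(z_{j,1},\dots,z_{j,m})\in\mathbb C^m$ via $z_{j,\alpha}=x_{j,\alpha}+iy_{j,\alpha}$; $\Gamma_j\neq0$ are real vortex strengths; $|\cdot|$ is the Euclidean norm; $C(2m)$ is the constant with $\Delta(C(2m)|\tilde z|^{2-2m})=\delta$ in $\mathbb R^{2m}$. The equations of motion are $\Gamma_j\dot x_{j,\alpha}=\partial\mathcal H/\partial y_{j,\alpha}$, $\Gamma_j\dot y_{j,\alpha}=-\partial\mathcal H/\partial x_{j,\alpha}$. *)

From HB Require Import structures.
From mathcomp Require Import all_boot all_order all_algebra.
From mathcomp Require Import all_classical all_reals all_analysis.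
Set Implicit Arguments. Unset Strict Implicit. Unset Printing Implicit Defensive.
Import Order.TTheory GRing.Theory Num.Theory.
Local Open Scope ring_scope.

(* A configuration of N vortices in R^{2m} = C^m is given by the two
   coordinate arrays x, y : 'I_N -> 'I_m -> R, with z_{j,a} = x j a + i y j a. *)

Section Vortex.
Variable R : realType.
Variables N m : nat.
Notation coord := ('I_N -> 'I_m -> R).

Definition shift (x : coord) (j : 'I_N) (a : 'I_m) (t : R) : coord :=
  fun k b => x k b + (if (k == j) && (b == a) then t else 0).

Definition dX (f : coord -> coord -> R) (x y : coord) j a : R :=
  derive1 (fun t => f (shift x j a t) y) 0.
Definition dY (f : coord -> coord -> R) (x y : coord) j a : R :=
  derive1 (fun t => f x (shift y j a t)) 0.

Definition pbracket (Gam : 'I_N -> R) (f g : coord -> coord -> R) (x y : coord) : R :=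
  \sum_(j < N) (Gam j)^-1 *
    \sum_(a < m) (dX f x y j a * dY g x y j a - dY f x y j a * dX g x y j a).

Definition vdist (x y : coord) (j k : 'I_N) : R :=
  Num.sqrt (\sum_(a < m) ((x j a - x k a) ^+ 2 + (y j a - y k a) ^+ 2)).

(* C(2m): Delta (C(2m) |z|^{2-2m}) = delta in R^{2m}, m > 1;
   |S^{2m-1}| = 2 pi^m / (m-1)!, C(n) = 1 / ((2-n) |S^{n-1}|). *)
Definition Cconst : R :=
  ((m.-1)`!)%:R / ((2 - 2 * m%:R) * (2 * pi ^+ m)).

Definition Ham (Gam : 'I_N -> R) (x y : coord) : R :=
  if m == 1%N then
    - (4 * pi)^-1 * \sum_(j < N) \sum_(k < N | (j < k)%N)
        Gam j * Gam k * ln (vdist x y j k ^+ 2)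
  else
    2 * Cconst * \sum_(j < N) \sum_(k < N | (j < k)%N)
        Gam j * Gam k * (vdist x y j k ^+ (2 * m - 2))^-1.

Definition Qc (Gam : 'I_N -> R) (a : 'I_m) (x y : coord) : R :=
  \sum_(j < N) Gam j * x j a.
Definition Pc (Gam : 'I_N -> R) (a : 'I_m) (x y : coord) : R :=
  \sum_(j < N) Gam j * y j a.
Definition Fplus (Gam : 'I_N -> R) (a b : 'I_m) (x y : coord) : R :=
  \sum_(j < N) Gam j * (x j a * x j b + y j a * y j b).
Definition Fminus (Gam : 'I_N -> R) (a b : 'I_m) (x y : coord) : R :=
  \sum_(j < N) Gam j * (x j a * y j b - x j b * y j a).

(* action of the unitary motion z |-> A z + c of C^m, A = U + i V
   unitary, c = c1 + i c2, acting diagonally on all vortices *)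
Definition unitary_mx (U V : 'M[R]_m) : Prop :=
  U^T *m U + V^T *m V = 1%:M /\ U^T *m V = V^T *m U.
Definition actX (U V : 'M[R]_m) (c1 : 'I_m -> R) (x y : coord) : coord :=
  fun j a => \sum_(b < m) (U a b * x j b - V a b * y j b) + c1 a.
Definition actY (U V : 'M[R]_m) (c2 : 'I_m -> R) (x y : coord) : coord :=
  fun j a => \sum_(b < m) (V a b * x j b + U a b * y j b) + c2 a.

Definition distinct_pos (x y : coord) : Prop :=
  forall j k : 'I_N, j != k -> exists a : 'I_m, x j a != x k a \/ y j a != y k a.

End Vortex.

From Pilot Require Import Defs.
From HB Require Import structures.
From mathcomp Require Import all_boot all_order all_algebra.
From mathcomp Require Import all_classical all_reals all_analysis.
From mathcomp Require Import ring.
(* H is a function of the squared pair distances |z_p - z_q|^2 alone, and unitary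
   motions of C^m preserve these.  Every integral is a vortex sum
   f = sum_j Gam_j g(z_j) with g quadratic, so the weights 1/Gam_j of the bracket
   cancel and, dH/dz_j being a combination of gradients of pair distances, {f, H}
   becomes a sum over the pairs p < q of the derivative of |z_p - z_q|^2 along the
   Hamiltonian flow of g.  That flow is a one-parameter group of unitary motions,
   so each of these derivatives vanishes. *)

Set Implicit Arguments.
Unset Strict Implicit.
Unset Printing Implicit Defensive.
Import Order.TTheory GRing.Theory Num.Theory.
Local Open Scope ring_scope.

Section RealDerivatives.
Variable R : realType.

Lemma is_derive_quadratic (C : R) (f : R -> R) (B : R) :
  (forall t, f t = f 0 + B * t + C * t ^+ 2) -> is_derive (0:R) 1 f B.
Proof.
move=> fE; have -> : f = horner ((f 0)%:P + B *: 'X + C *: 'X^2).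
  by apply/funext => t; rewrite [LHS]fE !hornerE.
apply: (is_derive_eq (is_derive_poly _ _)).
by rewrite !(derivD, derivZ, derivC, derivX, derivXn) !hornerE /=.
Qed.

Lemma is_deriveMl (x k : R) (f : R -> R) (df : R) :
  is_derive x 1 f df -> is_derive x 1 (fun t => k * f t) (k * df).
Proof. exact: is_deriveZ. Qed.

Lemma is_derive_sum_cond n (P : pred 'I_n) (h : 'I_n -> R -> R) (dh : 'I_n -> R) :
  (forall i, P i -> is_derive (0:R) 1 (h i) (dh i)) ->
  is_derive (0:R) 1 (fun t => \sum_(i < n | P i) h i t) (\sum_(i < n | P i) dh i).
Proof.
move=> hdh; rewrite -fct_sumE.
by elim/big_ind2 : _ => // *; [exact: is_derive_cst | exact: is_deriveD].
Qed.

End RealDerivatives.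

Section PairDistances.
Variables (R : realType) (N m : nat).
Notation coord := ('I_N -> 'I_m -> R).

Definition dist2 (x y : coord) (p q : 'I_N) : R :=
  \sum_(a < m) ((x p a - x q a) ^+ 2 + (y p a - y q a) ^+ 2).

Lemma dist2_swap x y p q : dist2 y x p q = dist2 x y p q.
Proof. by apply: eq_bigr => a _; rewrite addrC. Qed.

Lemma dist2_gt0 x y p q : distinct_pos x y -> p != q -> 0 < dist2 x y p q.
Proof.
move=> /(_ p q) xy_pq /xy_pq [a xy_a]; rewrite /dist2 (bigD1 a) //=.
have sq_ge0 (u v : R) : 0 <= (u - v) ^+ 2 by exact: sqr_ge0.
have sq_gt0 (u v : R) : u != v -> 0 < (u - v) ^+ 2 by rewrite exprn_even_gt0 //= subr_eq0.
apply: ltr_wpDr; first by apply: sumr_ge0 => b _; apply: addr_ge0.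
by case: xy_a => /sq_gt0; [apply: ltr_wpDr | apply: ltr_wpDl].
Qed.

Lemma shiftE (x : coord) j c t k b :
  Defs.shift x j c t k b = x k b + (k == j)%:R * (b == c)%:R * t.
Proof.
by rewrite /Defs.shift; case: (k == j); case: (b == c); rewrite /= ?mul1r ?mul0r ?addr0.
Qed.

Lemma dist2_shift x y j c t p q :
  dist2 (Defs.shift x j c t) y p q = dist2 x y p q
    + 2 * (x p c - x q c) * ((p == j)%:R - (q == j)%:R) * t
    + ((p == j)%:R - (q == j)%:R) ^+ 2 * t ^+ 2.
Proof.
rewrite /dist2 (bigD1 c) //= [in RHS](bigD1 c) //= !shiftE eqxx /=.
rewrite (eq_bigr (fun a => (x p a - x q a) ^+ 2 + (y p a - y q a) ^+ 2)); first ring.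
by move=> a /negbTE ac; rewrite !shiftE ac !mulr0 !mul0r !addr0.
Qed.

End PairDistances.

Section KroneckerSums.
Variable R : comPzRingType.

Lemma sum_delta (I : finType) (f : I -> R) i : \sum_j f j * (i == j)%:R = f i.
Proof.
rewrite (bigD1 i) //= eqxx mulr1 big1 ?addr0 // => j ji.
by rewrite eq_sym (negbTE ji) mulr0.
Qed.

Lemma sum_mul_delta_pairs n (P : rel 'I_n) (A : 'I_n -> 'I_n -> R) (f : 'I_n -> R) :
  \sum_(j < n) f j * \sum_(p < n) \sum_(q < n | P p q) A p q * ((p == j)%:R - (q == j)%:R)
  = \sum_(p < n) \sum_(q < n | P p q) A p q * (f p - f q).
Proof.
under eq_bigr do rewrite mulr_sumr; rewrite exchange_big; apply: eq_bigr => p _.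
under eq_bigr do rewrite mulr_sumr; rewrite exchange_big; apply: eq_bigr => q _.
under eq_bigr do rewrite mulrCA mulrBr.
by rewrite -mulr_sumr sumrB !sum_delta.
Qed.

End KroneckerSums.

Section Hamiltonian.
Variables (R : realType) (N m : nat) (Gam : 'I_N -> R).
Notation coord := ('I_N -> 'I_m -> R).

Definition pair_potential (s : R) : R :=
  if m == 1%N then - (4 * pi)^-1 * ln s else 2 * Cconst R m * (s ^+ m.-1)^-1.

Lemma derivable_pair_potential s : 0 < s -> derivable pair_potential s 1.
Proof.
move=> s_gt0; rewrite /pair_potential; case: (m == 1%N).
  by have [] := is_deriveZ (- (4 * pi)^-1) (is_derive1_ln s_gt0).
pose pow := horner ('X^(m.-1) : {poly R}).
have -> : (fun t => 2 * Cconst R m * (t ^+ m.-1)^-1) = (fun t => 2 * Cconst R m * (pow t)^-1).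
  by apply/funext => t; rewrite /pow hornerXn.
have pow_nz : pow s != 0 by rewrite /pow hornerXn expf_neq0 ?gt_eqF.
have pow_derivable : derivable pow s 1 by exact: derivable_horner.
by have [] := is_deriveZ (2 * Cconst R m) (derivableP (derivableV pow_nz pow_derivable)).
Qed.

Lemma HamE (x y : coord) : Ham Gam x y =
  \sum_(p < N) \sum_(q < N | (p < q)%N) Gam p * Gam q * pair_potential (dist2 x y p q).
Proof.
have sqr_vdist p q : vdist x y p q ^+ 2 = dist2 x y p q.
  by rewrite sqr_sqrtr //; apply: sumr_ge0 => a _; rewrite addr_ge0 ?sqr_ge0.
rewrite /Ham /pair_potential; case: (m == 1%N); rewrite mulr_sumr;
  apply: eq_bigr => p _; rewrite mulr_sumr; apply: eq_bigr => q _.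
  by rewrite sqr_vdist mulrCA.
have -> : (2 * m - 2 = 2 * m.-1)%N by rewrite -subn1 mulnBr muln1.
by rewrite exprM sqr_vdist mulrCA.
Qed.

Lemma Ham_swap (x y : coord) : Ham Gam y x = Ham Gam x y.
Proof. by rewrite !HamE; apply: eq_bigr => p _; apply: eq_bigr => q _; rewrite dist2_swap. Qed.

Definition pair_weight (x y : coord) (p q : 'I_N) : R :=
  Gam p * Gam q * derive1 pair_potential (dist2 x y p q).

Lemma dX_Ham (x y : coord) j c : (forall p q : 'I_N, (p < q)%N -> 0 < dist2 x y p q) ->
  dX (Ham Gam) x y j c = \sum_(p < N) \sum_(q < N | (p < q)%N)
    2 * pair_weight x y p q * (x p c - x q c) * ((p == j)%:R - (q == j)%:R).
Proof.
move=> dist2_pos; rewrite /dX derive1E; apply: derive_val.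
under eq_fun do rewrite HamE; under eq_fun do under eq_bigr do under eq_bigr do rewrite dist2_shift.
apply: is_derive_sum_cond => p _; apply: is_derive_sum_cond => q pq.
rewrite (_ : 2 * _ * _ * _ = Gam p * Gam q * (derive1 pair_potential (dist2 x y p q) *
  (2 * (x p c - x q c) * ((p == j)%:R - (q == j)%:R)))); last by rewrite /pair_weight; ring.
apply: is_deriveMl.
have pot_derive : is_derive (dist2 x y p q) 1 pair_potential
    (derive1 pair_potential (dist2 x y p q)).
  by rewrite derive1E; apply/derivableP/derivable_pair_potential/dist2_pos.
apply: is_derive1_comp; last first.
  by apply: (is_derive_quadratic (C := ((p == j)%:R - (q == j)%:R) ^+ 2)) => t; ring.
by rewrite mulr0 expr0n /= mulr0 !addr0; exact: pot_derive.
Qed.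

Lemma dY_Ham (x y : coord) j c : (forall p q : 'I_N, (p < q)%N -> 0 < dist2 x y p q) ->
  dY (Ham Gam) x y j c = \sum_(p < N) \sum_(q < N | (p < q)%N)
    2 * pair_weight x y p q * (y p c - y q c) * ((p == j)%:R - (q == j)%:R).
Proof.
move=> dist2_pos; have -> : dY (Ham Gam) x y j c = dX (Ham Gam) y x j c.
  by rewrite /dY /dX; under eq_fun do rewrite Ham_swap.
rewrite dX_Ham => [|p q /dist2_pos]; last by rewrite dist2_swap.
by apply: eq_bigr => p _; apply: eq_bigr => q _; rewrite /pair_weight dist2_swap.
Qed.

End Hamiltonian.

Section VortexSums.
Variables (R : realType) (N m : nat) (Gam : 'I_N -> R).
Notation coord := ('I_N -> 'I_m -> R).
Notation vec := ('I_m -> R).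

Definition vortex_sum (g : vec -> vec -> R) (x y : coord) : R :=
  \sum_(k < N) Gam k * g (x k) (y k).

Definition vec_shift (u : vec) (c : 'I_m) (t : R) : vec := fun b => u b + (b == c)%:R * t.

Lemma dX_vortex_sum g (x y : coord) j c dg :
  is_derive (0 : R) 1 (fun t => g (vec_shift (x j) c t) (y j)) dg ->
  dX (vortex_sum g) x y j c = Gam j * dg.
Proof.
move=> g_derive; rewrite /dX derive1E; apply: derive_val.
have shift_row k t : Defs.shift x j c t k = if k == j then vec_shift (x j) c t else x k.
  apply/funext => b; rewrite shiftE /vec_shift.
  by case: eqP => [->|_]; rewrite ?mul1r // mul0r mul0r addr0.
rewrite /vortex_sum; under eq_fun do under eq_bigr do rewrite shift_row fun_if.
have -> : Gam j * dg = \sum_(k < N) (if k == j then Gam j * dg else 0).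
  by rewrite -big_mkcond big_pred1_eq.
apply: is_derive_sum_cond => k _; case: eqP => [->|_]; first exact: is_deriveMl.
exact: is_derive_cst.
Qed.

Lemma dY_vortex_sum g (x y : coord) j c dg :
  is_derive (0 : R) 1 (fun t => g (x j) (vec_shift (y j) c t)) dg ->
  dY (vortex_sum g) x y j c = Gam j * dg.
Proof. exact: (@dX_vortex_sum (fun u v => g v u) y x j c dg). Qed.

Lemma pbracket_vortex_sum_Ham g gX gY (x y : coord) :
  (forall j, Gam j != 0) ->
  (forall p q : 'I_N, (p < q)%N -> 0 < dist2 x y p q) ->
  (forall u v c, is_derive (0 : R) 1 (fun t => g (vec_shift u c t) v) (gX u v c)) ->
  (forall u v c, is_derive (0 : R) 1 (fun t => g u (vec_shift v c t)) (gY u v c)) ->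
  pbracket Gam (vortex_sum g) (Ham Gam) x y =
  \sum_(p < N) \sum_(q < N | (p < q)%N) 2 * pair_weight Gam x y p q *
    \sum_(c < m) ((gX (x p) (y p) c - gX (x q) (y q) c) * (y p c - y q c)
                - (gY (x p) (y p) c - gY (x q) (y q) c) * (x p c - x q c)).
Proof.
move=> Gam_neq0 dist2_pos gX_derive gY_derive; rewrite /pbracket.
under eq_bigr => j _.
  rewrite mulr_sumr; under eq_bigr => c _ do
    rewrite (dX_vortex_sum (gX_derive _ _ c)) (dY_vortex_sum (gY_derive _ _ c))
            -!mulrA -mulrBr mulKf // dX_Ham // dY_Ham //.
  over.
rewrite exchange_big /=.
under eq_bigr => c _ do rewrite sumrB !sum_mul_delta_pairs.
rewrite sumrB exchange_big [X in _ - X]exchange_big -sumrB; apply: eq_bigr => p _.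
rewrite exchange_big [X in _ - X]exchange_big -sumrB; apply: eq_bigr => q _.
rewrite -sumrB mulr_sumr; apply: eq_bigr => c _; ring.
Qed.

End VortexSums.

Section CommutingIntegrals.
Variables (R : realType) (N m : nat) (Gam : 'I_N -> R).
Notation coord := ('I_N -> 'I_m -> R).
Notation vec := ('I_m -> R).

(* (gY, -gX) is the Hamiltonian vector field of the one-vortex function g with
   partial derivatives gX, gY; the condition says that it leaves the squared
   distance of any two vortices stationary. *)
Definition preserves_pair_dist2 (gX gY : vec -> vec -> 'I_m -> R) :=
  forall u1 v1 u2 v2 : vec, \sum_(c < m) ((gX u1 v1 c - gX u2 v2 c) * (v1 c - v2 c)
                                       - (gY u1 v1 c - gY u2 v2 c) * (u1 c - u2 c)) = 0.

Hypothesis Gam_neq0 : forall j, Gam j != 0.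
Variables x y : coord.
Hypothesis dist2_pos : forall p q : 'I_N, (p < q)%N -> 0 < dist2 x y p q.

Lemma pbracket_vortex_sum_Ham_eq0 g gX gY :
  (forall u v c, is_derive (0 : R) 1 (fun t => g (vec_shift u c t) v) (gX u v c)) ->
  (forall u v c, is_derive (0 : R) 1 (fun t => g u (vec_shift v c t)) (gY u v c)) ->
  preserves_pair_dist2 gX gY -> pbracket Gam (vortex_sum Gam g) (Ham Gam) x y = 0.
Proof.
move=> gX_derive gY_derive g_preserves.
rewrite (pbracket_vortex_sum_Ham Gam_neq0 dist2_pos gX_derive gY_derive).
by apply: big1 => p _; apply: big1 => q _; rewrite g_preserves mulr0.
Qed.

Lemma pbracket_Qc_Ham a : pbracket Gam (Qc Gam a) (Ham Gam) x y = 0.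
Proof.
apply: (@pbracket_vortex_sum_Ham_eq0 (fun u _ => u a) (fun _ _ c => (a == c)%:R) (fun _ _ _ => 0))
  => [u v c|u v c|u1 v1 u2 v2].
- by apply: (is_derive_quadratic (C := 0)) => t; rewrite /vec_shift; ring.
- by apply: (is_derive_quadratic (C := 0)) => t; ring.
- by apply: big1 => c _; ring.
Qed.

Lemma pbracket_Pc_Ham a : pbracket Gam (Pc Gam a) (Ham Gam) x y = 0.
Proof.
apply: (@pbracket_vortex_sum_Ham_eq0 (fun _ v => v a) (fun _ _ _ => 0) (fun _ _ c => (a == c)%:R))
  => [u v c|u v c|u1 v1 u2 v2].
- by apply: (is_derive_quadratic (C := 0)) => t; ring.
- by apply: (is_derive_quadratic (C := 0)) => t; rewrite /vec_shift; ring.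
- by apply: big1 => c _; ring.
Qed.

Lemma pbracket_Fplus_Ham a b : pbracket Gam (Fplus Gam a b) (Ham Gam) x y = 0.
Proof.
apply: (@pbracket_vortex_sum_Ham_eq0 (fun u v => u a * u b + v a * v b)
  (fun u _ c => (a == c)%:R * u b + (b == c)%:R * u a)
  (fun _ v c => (a == c)%:R * v b + (b == c)%:R * v a)) => [u v c|u v c|u1 v1 u2 v2].
- by apply: (is_derive_quadratic (C := (a == c)%:R * (b == c)%:R)) => t; rewrite /vec_shift; ring.
- by apply: (is_derive_quadratic (C := (a == c)%:R * (b == c)%:R)) => t; rewrite /vec_shift; ring.
rewrite (eq_bigr (fun c =>
    ((u1 b - u2 b) * (v1 c - v2 c) - (v1 b - v2 b) * (u1 c - u2 c)) * (a == c)%:R +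
    ((u1 a - u2 a) * (v1 c - v2 c) - (v1 a - v2 a) * (u1 c - u2 c)) * (b == c)%:R)) => [|c _].
  by rewrite big_split !sum_delta /=; ring.
by ring.
Qed.

Lemma pbracket_Fminus_Ham a b : pbracket Gam (Fminus Gam a b) (Ham Gam) x y = 0.
Proof.
apply: (@pbracket_vortex_sum_Ham_eq0 (fun u v => u a * v b - u b * v a)
  (fun _ v c => (a == c)%:R * v b - (b == c)%:R * v a)
  (fun u _ c => (b == c)%:R * u a - (a == c)%:R * u b)) => [u v c|u v c|u1 v1 u2 v2].
- by apply: (is_derive_quadratic (C := 0)) => t; rewrite /vec_shift; ring.
- by apply: (is_derive_quadratic (C := 0)) => t; rewrite /vec_shift; ring.
rewrite (eq_bigr (fun c =>
    ((v1 b - v2 b) * (v1 c - v2 c) + (u1 b - u2 b) * (u1 c - u2 c)) * (a == c)%:R -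
    ((v1 a - v2 a) * (v1 c - v2 c) + (u1 a - u2 a) * (u1 c - u2 c)) * (b == c)%:R)) => [|c _].
  by rewrite sumrB !sum_delta /=; ring.
by ring.
Qed.

End CommutingIntegrals.

Section UnitaryInvariance.
Variables (R : realType) (m : nat) (U V : 'M[R]_m).
Hypothesis UV_unitary : unitary_mx U V.

Let mul_trmx_entry (A B : 'M[R]_m) b b' : (A^T *m B) b b' = \sum_(a < m) A a b * B a b'.
Proof. by rewrite mxE; apply: eq_bigr => a _; rewrite mxE. Qed.

Lemma unitary_gram b b' :
  \sum_(a < m) (U a b * U a b' + V a b * V a b') = (b == b')%:R.
Proof.
have := congr1 (fun M : 'M[R]_m => M b b') UV_unitary.1.
by rewrite [X in X = _]mxE !mul_trmx_entry mxE big_split.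
Qed.

Lemma unitary_cross_sym b b' :
  \sum_(a < m) (V a b * U a b' - U a b * V a b') = 0.
Proof. by rewrite sumrB -!mul_trmx_entry UV_unitary.2 subrr. Qed.

Lemma unitary_sqnorm (u v : 'I_m -> R) :
  \sum_(a < m) ((\sum_(b < m) (U a b * u b - V a b * v b)) ^+ 2 +
                (\sum_(b < m) (V a b * u b + U a b * v b)) ^+ 2)
  = \sum_(a < m) (u a ^+ 2 + v a ^+ 2).
Proof.
pose A a b := U a b * u b - V a b * v b; pose B a b := V a b * u b + U a b * v b.
have sqr_sum (f : 'I_m -> R) : (\sum_b f b) ^+ 2 = \sum_b \sum_b' f b * f b'.
  by rewrite expr2 mulr_suml; apply: eq_bigr => b _; rewrite mulr_sumr.
transitivity (\sum_(a < m) \sum_(b < m) \sum_(b' < m) (A a b * A a b' + B a b * B a b')).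
  by apply: eq_bigr => a _; rewrite !sqr_sum -big_split; apply: eq_bigr => b _; rewrite -big_split.
rewrite exchange_big; under eq_bigr do rewrite exchange_big /=.
transitivity (\sum_(b < m) \sum_(b' < m) (u b * u b' + v b * v b') * (b == b')%:R).
  apply: eq_bigr => b _; apply: eq_bigr => b' _.
  have -> : \sum_(a < m) (A a b * A a b' + B a b * B a b') =
      (u b * u b' + v b * v b') * \sum_(a < m) (U a b * U a b' + V a b * V a b') +
      (u b * v b' - v b * u b') * \sum_(a < m) (V a b * U a b' - U a b * V a b').
    by rewrite !mulr_sumr -big_split; apply: eq_bigr => a _; rewrite /A /B /=; ring.
  by rewrite unitary_gram unitary_cross_sym mulr0 addr0.
by apply: eq_bigr => b _; rewrite sum_delta -!expr2.
Qed.

Lemma dist2_act N (x y : 'I_N -> 'I_m -> R) c1 c2 p q :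
  dist2 (actX U V c1 x y) (actY U V c2 x y) p q = dist2 x y p q.
Proof.
rewrite /dist2 -(unitary_sqnorm (fun b => x p b - x q b) (fun b => y p b - y q b)).
apply: eq_bigr => a _; rewrite /actX /actY !opprD addrACA subrr addr0.
rewrite [X in _ + X ^+ 2]addrACA subrr addr0.
by rewrite -!sumrB; congr (_ ^+ 2 + _ ^+ 2); apply: eq_bigr => b _; ring.
Qed.

End UnitaryInvariance.

Theorem theorem4p2 (R : realType) (N m : nat) (Gam : 'I_N -> R) :
  (0 < m)%N ->
  (forall j, Gam j != 0) ->
  (* invariance of the Hamiltonian under E(2m) = U(m) |x R^{2m} *)
  (forall (U V : 'M[R]_m) (c1 c2 : 'I_m -> R) (x y : 'I_N -> 'I_m -> R),
     unitary_mx U V -> distinct_pos x y ->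
     Ham Gam (actX U V c1 x y) (actY U V c2 x y) = Ham Gam x y) /\
  (* the m^2 + 2m integrals Poisson commute with the Hamiltonian *)
  (forall x y : 'I_N -> 'I_m -> R, distinct_pos x y ->
     (forall a : 'I_m, pbracket Gam (Qc Gam a) (Ham Gam) x y = 0) /\
     (forall a : 'I_m, pbracket Gam (Pc Gam a) (Ham Gam) x y = 0) /\
     (forall a b : 'I_m, (a <= b)%N -> pbracket Gam (Fplus Gam a b) (Ham Gam) x y = 0) /\
     (forall a b : 'I_m, (a < b)%N -> pbracket Gam (Fminus Gam a b) (Ham Gam) x y = 0)).
Proof.
move=> _ Gam_neq0; split=> [U V c1 c2 x y UV_unitary _ | x y xy_distinct].
  by rewrite !HamE; apply: eq_bigr => p _; apply: eq_bigr => q _; rewrite dist2_act.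
have dist2_pos (p q : 'I_N) : (p < q)%N -> 0 < dist2 x y p q.
  by move=> pq; apply: dist2_gt0 => //; apply: contraTneq pq => ->; rewrite ltnn.
split; [|split; [|split]] => [a | a | a b _ | a b _].
- exact: pbracket_Qc_Ham.
- exact: pbracket_Pc_Ham.
- exact: pbracket_Fplus_Ham.
- exact: pbracket_Fminus_Ham.
Qed.
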